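(* Let $\mathcal X,\mathcal Y,\mathcal Z$ be finite sets, $\rho$ a probability distribution on $\mathcal X$, $\mathsf E:\mathcal Y\to\mathcal Z$ a map, $\pi_0$ a reference policy with $\pi_0(y\mid x)>0$ for all $x,y$, and $\beta>0$. Let $\mathcal R:\Delta(\mathcal Z)\to\mathbb R$ be convex and lower semi-continuous. Then: (1) For every policy $\pi\in\Delta(\mathcal Y)^{\mathcal X}$, $$\mathcal J(\pi)=\sup_{\mathsf q}\ \mathcal G(\pi,\mathsf q),$$ where the supremum ranges over all families $\mathsf q=(\mathsf q(\cdot\mid x))_{x\in\mathcal X}$ with each $\mathsf q(\cdot\mid x)$ in the interior of $\Delta(\mathcal Z)$. Consequently, for every nonempty set $\Pi\subseteq\Delta(\mathcal Y)^{\mathcal X}$, $\inf_{\pi\in\Pi}\mathcal J(\pi)=\inf_{\pi\in\Pi}\sup_{\mathsf q}\mathcal G(\pi,\mathsf q)$. (2) For a fixed target family $\mathsf q$ (each $\mathsf q(\cdot\mid x)$ in the interior of $\Delta(\mathcal Z)$), define $\tilde{\mathsf q}(y\mid x)=\pi_0(y\mid x)\,\mathsf q(\mathsf E(y)\mid x)/C_x$ with $C_x=\sum_{y'}\pi_0(y'\mid x)\mathsf q(\mathsf E(y')\mid x)$. Then for every $\pi$, $$\mathcal G(\pi,\mathsf q)=\beta\,\mathbb E_{x\sim\rho}\big[\mathrm{D_{KL}}(\pi(\cdot\mid x)\,\|\,\tilde{\mathsf q}(\cdot\mid x))\big]+\kappa(\mathsf q),$$ where $\kappa(\mathsf q)$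 does not depend on $\pi$. In particular, over $\Pi=\Delta(\mathcal Y)^{\mathcal X}$, the minimizer of $\pi\mapsto\mathcal G(\pi,\mathsf q)$ is $\pi^*(y\mid x)\propto\pi_0(y\mid x)\,\mathsf q(\mathsf E(y)\mid x)$, unique on every $x$ with $\rho(x)>0$.
   Context: A policy $\pi\in\Delta(\mathcal Y)^{\mathcal X}$ is a family of conditional distributions $\pi(\cdot\mid x)$ on $\mathcal Y$. Its induced answer marginal is $\nu_\pi(z\mid x)=\sum_{y\in\mathsf E^{-1}(z)}\pi(y\mid x)$. The primal objective is $\mathcal J(\pi)=\mathbb E_{x\sim\rho}\big[\mathcal R(\nu_\pi(\cdot\mid x))+\beta\,\mathrm{D_{KL}}(\pi(\cdot\mid x)\|\pi_0(\cdot\mid x))\big]$. The Fenchel conjugate is $\mathcal R^*(u)=\sup_{\nu\in\Delta(\mathcal Z)}\{\langle\nu,u\rangle-\mathcal R(\nu)\}$ for $u\in\mathbb R^{\mathcal Z}$, and for $\mathsf q$ in the interior of $\Delta(\mathcal Z)$ set $\Psi(\mathsf q)=\mathcal R^*(-\beta\log\mathsf q)$ (log taken coordinatewise). The game objective is $$\mathcal G(\pi,\mathsf q)=\mathbb E_{x\sim\rho}\Big[\beta\,\mathrm{D_{KL}}(\pi(\cdot\mid x)\|\pi_0(\cdot\mid x))-\beta\,\mathbb E_{y\sim\pi(\cdot\mid x)}[\log\mathsf q(\mathsf E(y)\mid x)]-\Psi(\mathsf q(\cdot\mid x))\Big].$$ *)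

From HB Require Import structures.
From mathcomp Require Import all_boot all_order all_algebra.
From mathcomp Require Import all_classical all_reals all_analysis.
Set Implicit Arguments. Unset Strict Implicit. Unset Printing Implicit Defensive.
Import Order.TTheory GRing.Theory Num.Theory.
Local Open Scope classical_set_scope.
Local Open Scope ring_scope.

Section Defs.
Variable R : realType.

Definition simplex (T : finType) (p : T -> R) : Prop :=
  (forall t, 0 <= p t) /\ \sum_t p t = 1.

Definition int_simplex (T : finType) (p : T -> R) : Prop :=
  (forall t, 0 < p t) /\ \sum_t p t = 1.

Definition is_policy (X Y : finType) (pi : X -> Y -> R) : Prop :=
  forall x, simplex (pi x).

Definition is_target (X Z : finType) (q : X -> Z -> R) : Prop :=
  forall x, int_simplex (q x).

Definition marginal (X Y Z : finType) (E : Y -> Z) (pi : X -> Y -> R)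
  (x : X) : Z -> R := fun z => \sum_(y | E y == z) pi x y.

Definition KL (Y : finType) (p q : Y -> R) : R :=
  \sum_y (if p y == 0 then 0 else p y * ln (p y / q y)).

Definition Ex (X : finType) (rho : X -> R) (f : X -> R) : R :=
  \sum_x rho x * f x.

Definition convex_on_simplex (Z : finType) (Rf : (Z -> R) -> R) : Prop :=
  forall (nu1 nu2 : Z -> R) (t : R), simplex nu1 -> simplex nu2 ->
    0 <= t <= 1 ->
    Rf (fun z => t * nu1 z + (1 - t) * nu2 z) <= t * Rf nu1 + (1 - t) * Rf nu2.

(* lower semicontinuity of Rf on Delta(Z) (topology of R^Z restricted to
   the simplex; coordinatewise distance = sup-norm) *)
Definition lsc_on_simplex (Z : finType) (Rf : (Z -> R) -> R) : Prop :=
  forall nu : Z -> R, simplex nu ->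
    forall e : R, 0 < e -> exists2 d : R, 0 < d &
      forall mu : Z -> R, simplex mu -> (forall z, `|mu z - nu z| < d) ->
        Rf nu - e < Rf mu.

Definition fconj (Z : finType) (Rf : (Z -> R) -> R) (u : Z -> R) : R :=
  sup [set r | exists nu : Z -> R, simplex nu /\ r = \sum_z nu z * u z - Rf nu].

Definition Psi (Z : finType) (Rf : (Z -> R) -> R) (beta : R) (q : Z -> R) : R :=
  fconj Rf (fun z => - (beta * ln (q z))).

Definition Jobj (X Y Z : finType) (rho : X -> R) (E : Y -> Z)
  (pi0 : X -> Y -> R) (beta : R) (Rf : (Z -> R) -> R) (pi : X -> Y -> R) : R :=
  Ex rho (fun x => Rf (marginal E pi x) + beta * KL (pi x) (pi0 x)).

Definition Gobj (X Y Z : finType) (rho : X -> R) (E : Y -> Z)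
  (pi0 : X -> Y -> R) (beta : R) (Rf : (Z -> R) -> R)
  (pi : X -> Y -> R) (q : X -> Z -> R) : R :=
  Ex rho (fun x => beta * KL (pi x) (pi0 x)
                   - beta * (\sum_y pi x y * ln (q x (E y)))
                   - Psi Rf beta (q x)).

Definition Cnorm (X Y Z : finType) (E : Y -> Z) (pi0 : X -> Y -> R)
  (q : X -> Z -> R) (x : X) : R := \sum_y pi0 x y * q x (E y).

Definition qtilde (X Y Z : finType) (E : Y -> Z) (pi0 : X -> Y -> R)
  (q : X -> Z -> R) : X -> Y -> R :=
  fun x y => pi0 x y * q x (E y) / Cnorm E pi0 q x.

End Defs.

From HB Require Import structures.
From mathcomp Require Import all_boot all_order all_algebra.
From mathcomp Require Import all_classical all_reals all_analysis.
From mathcomp Require Import ring lra.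
Import Order.TTheory GRing.Theory Num.Theory.
Local Open Scope classical_set_scope.
Local Open Scope ring_scope.
Set Implicit Arguments. Unset Strict Implicit. Unset Printing Implicit Defensive.

(* (1) Fenchel-Young applied to the answer marginal [nu] of [pi x] gives
   [Psi (q x) >= <nu, - beta ln q x> - R nu] for every target, hence [G <= J].  A convex
   function that is finite on the simplex is bounded there, so [R^*] is finite, and if it
   is also lower semicontinuous it agrees with its biconjugate: for each [x] some slope [u]
   makes [<nu, u> - R^* u] eps-close to [R nu].  The target [q = softmax (- u / beta)]
   realises this value, because [- beta ln q] differs from [u] by a constant that [Psi]
   absorbs.  The statement about infima follows pointwise.
   (2) [ln qtilde = ln pi0 + ln q (E .) - ln C], so [G (pi, q)] is [beta E_rho KL (pi || qtilde)]
   plus a term free of [pi]; Gibbs' inequality then identifies the minimiser. *)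

Section Simplex.
Variables (R : realType) (T : finType).
Implicit Types (p q u : T -> R) (t : T).

Lemma sum_ge_term (F : T -> R) t : (forall t, 0 <= F t) -> F t <= \sum_t F t.
Proof. by move=> F0; rewrite (bigD1 t) //= lerDl sumr_ge0. Qed.

Lemma simplex_le1 p t : simplex p -> p t <= 1.
Proof. by case=> p0 <-; exact: sum_ge_term. Qed.

Lemma simplex_pos p : simplex p -> exists t, 0 < p t.
Proof.
case=> p0 p1; have p1_neq0 : \sum_t p t <> 0 by rewrite p1; exact/eqP/oner_neq0.
by have [t /andP[_ pt]] := psumr_neq0P (fun t _ => p0 t) p1_neq0; exists t.
Qed.

Lemma simplex_convex p q (s : R) : simplex p -> simplex q -> 0 <= s <= 1 ->
  simplex (fun t => s * p t + (1 - s) * q t).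
Proof.
move=> [p0 p1] [q0 q1] /andP[s0 s1]; split => [t|].
  by rewrite addr_ge0 // mulr_ge0 // subr_ge0.
by rewrite big_split /= -!mulr_sumr p1 q1; ring.
Qed.

Lemma simplex_sumD p u (c : R) : simplex p ->
  \sum_t p t * (u t + c) = \sum_t p t * u t + c.
Proof.
case=> _ p1; rewrite -[c in RHS]mul1r -p1 mulr_suml -big_split.
by apply: eq_bigr => t _; rewrite mulrDr.
Qed.

Lemma simplex_sum_le_norm p u : simplex p -> \sum_t p t * u t <= \sum_t `|u t|.
Proof.
move=> hp; apply: ler_sum => t _; apply: le_trans (ler_norm _) _.
by rewrite normrM (ger0_norm (hp.1 t)) ler_piMl // simplex_le1.
Qed.

Definition vertex t0 : T -> R := fun t => (t == t0)%:R.

Lemma vertex_simplex t0 : simplex (vertex t0).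
Proof.
split=> [t|]; first exact: ler0n.
by rewrite (bigD1 t0) //= /vertex eqxx big1 ?addr0 // => t /negbTE ->.
Qed.

Lemma simplex_vertex p t0 : simplex p -> p t0 = 1 -> p = vertex t0.
Proof.
case=> p0 p1 pt0; apply: boolp.funext => t; rewrite /vertex.
have [->|ntt0] := eqVneq t t0; first by rewrite pt0.
have rest : \sum_(t | t != t0) p t = 0 by move: p1; rewrite (bigD1 t0) //= pt0; lra.
exact: (psumr_eq0P (fun t _ => p0 t) rest).
Qed.

Definition drop_vertex p t0 : T -> R :=
  fun t => if t == t0 then 0 else p t / (1 - p t0).

Lemma drop_vertex_simplex p t0 : simplex p -> p t0 < 1 -> simplex (drop_vertex p t0).
Proof.
move=> [p0 p1] pt0_lt1; have s0 : 0 < 1 - p t0 by rewrite subr_gt0.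
split=> [t|]; first by rewrite /drop_vertex; case: ifP => // _; rewrite divr_ge0 // ltW.
rewrite (bigD1 t0) //= /drop_vertex eqxx add0r.
rewrite (eq_bigr (fun t => p t / (1 - p t0))) => [|t /negbTE -> //].
rewrite -mulr_suml; have -> : \sum_(t | t != t0) p t = 1 - p t0.
  by move: p1; rewrite (bigD1 t0) //=; lra.
by rewrite divff // gt_eqF.
Qed.

Lemma drop_vertexK p t0 : p t0 < 1 ->
  p = (fun t => p t0 * vertex t0 t + (1 - p t0) * drop_vertex p t0 t).
Proof.
move=> pt0_lt1; apply: boolp.funext => t; rewrite /vertex /drop_vertex.
have [-> |_] := eqVneq t t0; first by rewrite mulr1 mulr0 addr0.
by rewrite mulr0 add0r mulrC divfK // subr_eq0 gt_eqF.
Qed.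

Lemma card_support_drop_vertex p t0 : p t0 != 0 ->
  (#|[pred t | drop_vertex p t0 t != 0%R]| < #|[pred t | p t != 0%R]|)%N.
Proof.
move=> pt0; rewrite [X in (_ < X)%N](cardD1 t0) inE pt0 ltnS.
apply: subset_leq_card; apply/fintype.subsetP => t; rewrite !inE /drop_vertex.
have [->|ntt0] := eqVneq t t0; first by rewrite eqxx.
by apply: contra => /eqP ->; rewrite mul0r.
Qed.

End Simplex.

Section ConvexBounds.
Variables (R : realType) (Z : finType) (Rf : (Z -> R) -> R).
Hypothesis Rf_convex : convex_on_simplex Rf.

Lemma convex_bounded_above : exists M, forall mu, simplex mu -> Rf mu <= M.
Proof.
pose M : R := \sum_z `|Rf (vertex R z)|; exists M.
have le_M z : Rf (vertex R z) <= M.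
  exact: le_trans (ler_norm _) (sum_ge_term (F := fun w => `|Rf (vertex R w)|) z (fun w => normr_ge0 _)).
suff bound n mu : simplex mu -> (#|[pred z | mu z != 0%R]| <= n)%N -> Rf mu <= M.
  by move=> mu hmu; exact: bound.
elim: n mu => [|n IHn] mu hmu; have [z0 mu_z0] := simplex_pos hmu.
  by rewrite leqn0 => /eqP/card0_eq/(_ z0); rewrite !inE gt_eqF.
move=> card_mu; have [mu_z0_1|mu_z0_neq1] := eqVneq (mu z0) 1.
  by rewrite (simplex_vertex hmu mu_z0_1).
have mu_z0_lt1 : mu z0 < 1 by rewrite lt_neqAle mu_z0_neq1 simplex_le1.
have drop_simplex := drop_vertex_simplex hmu mu_z0_lt1.
have le_drop : Rf (drop_vertex mu z0) <= M.
  by apply: IHn => //; rewrite -ltnS (leq_trans (card_support_drop_vertex _) card_mu) ?gt_eqF.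
have mu_z0_01 : 0 <= mu z0 <= 1 by rewrite !ltW.
have compl_ge0 : 0 <= 1 - mu z0 by rewrite subr_ge0 ltW.
rewrite (drop_vertexK mu_z0_lt1).
apply: le_trans (Rf_convex (vertex_simplex _ z0) drop_simplex mu_z0_01) _.
have := ler_wpM2l (ltW mu_z0) (le_M z0); have := ler_wpM2l compl_ge0 le_drop.
lra.
Qed.

(* Reflect [mu] through the barycenter [fun=> s]: the barycenter is a convex combination
   of [mu] and of the simplex point [w], so convexity and the upper bound at [w] bound
   [Rf mu] from below. *)
Lemma convex_bounded_below : exists m, forall mu, simplex mu -> m <= Rf mu.
Proof.
have [M le_M] := convex_bounded_above.
have [z0 _|Z0] := pickP (@predT Z); last first.
  by exists 0 => mu /simplex_pos[z]; move: (Z0 z).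
have card_gt0 : (0 < #|Z|)%N by apply/card_gt0P; exists z0.
pose s : R := #|Z|%:R^-1.
have s_gt0 : 0 < s by rewrite invr_gt0 ltr0n.
have sum_s : \sum_(z : Z) s = 1 by rewrite sumr_const -mulr_natl mulfV // pnatr_eq0 -lt0n.
pose t := (1 + s)^-1.
have t_gt0 : 0 < t by rewrite invr_gt0; lra.
have t_le1 : t <= 1 by rewrite invf_le1; lra.
exists (((1 + s) * Rf (fun=> s) - M) / s) => mu hmu.
pose w z := (1 + s) * s - s * mu z.
have w_simplex : simplex w.
  split=> [z|]; first by have := simplex_le1 z hmu; rewrite /w; nra.
  by rewrite /w sumrB -!mulr_sumr sum_s hmu.2; lra.
have -> : (fun=> s) = (fun z => t * w z + (1 - t) * mu z).
  by apply: boolp.funext => z; rewrite /w /t; field; lra.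
have t_01 : 0 <= t <= 1 by rewrite ltW.
have conv := Rf_convex w_simplex hmu t_01.
have t_inv : (1 + s) * t = 1 by rewrite mulfV //; lra.
have t_compl : (1 + s) * (1 - t) = s by rewrite mulrBr t_inv mulr1 addrAC subrr add0r.
have := ler_wpM2l (ltW (ltr_wpDl ler01 s_gt0)) conv; rewrite mulrDr !mulrA t_inv t_compl mul1r.
have := le_M w w_simplex; rewrite ler_pdivrMr //; lra.
Qed.

End ConvexBounds.

Section Conjugate.
Variables (R : realType) (Z : finType) (Rf : (Z -> R) -> R).
Implicit Types (mu nu u : Z -> R).

Lemma fconj_le u (b : R) nu0 : simplex nu0 ->
  (forall mu, simplex mu -> \sum_z mu z * u z - Rf mu <= b) -> fconj Rf u <= b.
Proof.
move=> hnu0 le_b; apply: ge_sup; first by exists (\sum_z nu0 z * u z - Rf nu0); exists nu0.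
by move=> _ [mu [hmu ->]]; exact: le_b.
Qed.

Variables (m : R) (Rf_ge : forall mu, simplex mu -> m <= Rf mu).

Lemma fenchel_young u nu : simplex nu -> \sum_z nu z * u z - Rf nu <= fconj Rf u.
Proof.
move=> hnu; apply: sup_upper_bound; last by exists nu.
split; first by exists (\sum_z nu z * u z - Rf nu); exists nu.
exists (\sum_z `|u z| - m) => _ [mu [hmu ->]].
by rewrite lerB ?simplex_sum_le_norm ?Rf_ge.
Qed.

Lemma fconj_shift u (c : R) nu0 : simplex nu0 ->
  fconj Rf (fun z => u z + c) = fconj Rf u + c.
Proof.
move=> hnu0; apply/eqP; rewrite eq_le; apply/andP; split.
  apply: (fconj_le hnu0) => mu hmu.
  by rewrite simplex_sumD // addrAC lerD2r fenchel_young.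
rewrite -lerBrDr; apply: (fconj_le hnu0) => mu hmu.
by rewrite lerBrDr -addrAC -simplex_sumD // fenchel_young.
Qed.

End Conjugate.

Section Proximal.
Variables (R : realType) (Z : finType) (Rf : (Z -> R) -> R) (nu : Z -> R) (t : R).
Implicit Types (mu : Z -> R).

Definition prox_obj mu := Rf mu + t / 2 * \sum_z (mu z - nu z) ^+ 2.

Definition approx_argmin mu (delta : R) :=
  simplex mu /\ forall mu', simplex mu' -> prox_obj mu < prox_obj mu' + delta.

Lemma prox_obj_center : prox_obj nu = Rf nu.
Proof. by rewrite /prox_obj big1 ?mulr0 ?addr0 // => z _; rewrite subrr expr0n. Qed.

Lemma approx_argmin_exists (m delta : R) : (forall mu, simplex mu -> m <= Rf mu) ->
  simplex nu -> 0 <= t -> 0 < delta -> exists mu, approx_argmin mu delta.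
Proof.
move=> Rf_ge hnu t_ge0 delta_gt0.
have prox_ge mu : simplex mu -> m <= prox_obj mu.
  move=> hmu; apply: le_trans (Rf_ge _ hmu) _; rewrite lerDl mulr_ge0 ?divr_ge0 //.
  by apply: sumr_ge0 => z _; exact: sqr_ge0.
pose S := [set r | exists mu, simplex mu /\ r = - prox_obj mu].
have S_sup : has_sup S.
  split; first by exists (- prox_obj nu); exists nu.
  by exists (- m) => _ [mu [hmu ->]]; rewrite lerN2 prox_ge.
have [_ [mu [hmu ->]] near_sup] := sup_adherent delta_gt0 S_sup.
exists mu; split=> // mu' hmu'.
have : - prox_obj mu' <= sup S by apply: sup_upper_bound => //; exists mu'.
lra.
Qed.

Lemma approx_argmin_near (m delta : R) mu z : (forall mu, simplex mu -> m <= Rf mu) ->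
  simplex nu -> 0 < t -> approx_argmin mu delta ->
  t * (mu z - nu z) ^+ 2 < 2 * (Rf nu + delta - m).
Proof.
move=> Rf_ge hnu t_gt0 [hmu mu_min].
have := mu_min nu hnu; rewrite prox_obj_center /prox_obj.
have := Rf_ge mu hmu.
have := ler_wpM2l (ltac:(lra) : 0 <= t / 2)
  (sum_ge_term (F := fun w => (mu w - nu w) ^+ 2) z (fun w => sqr_ge0 _)).
lra.
Qed.

(* Comparing [mu] with the point [s mu' + (1 - s) mu] of the segment towards [mu']
   and dividing by [s]: [mu] maximises [<., u> - Rf] up to [t s + delta / s]. *)
Lemma approx_argmin_support (delta s : R) mu : convex_on_simplex Rf ->
  0 <= t -> 0 < s <= 1 -> approx_argmin mu delta ->
  let u z := t * (nu z - mu z) in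
  forall mu', simplex mu' ->
    \sum_z mu' z * u z - Rf mu' <= \sum_z mu z * u z - Rf mu + (t * s + delta / s).
Proof.
move=> Rf_convex t_ge0 /andP[s_gt0 s_le1] [hmu mu_min] u mu' hmu'.
pose mus z := s * mu' z + (1 - s) * mu z.
have s01 : 0 <= s <= 1 by rewrite ltW.
have conv := Rf_convex _ _ _ hmu' hmu s01.
have := mu_min mus (simplex_convex hmu' hmu s01); rewrite /prox_obj.
pose A := \sum_z (mu z - nu z) ^+ 2.
pose B := \sum_z (mu z - nu z) * (mu' z - mu z).
pose C := \sum_z (mu' z - mu z) ^+ 2.
have -> : \sum_z (mus z - nu z) ^+ 2 = A + 2 * s * B + s ^+ 2 * C.
  rewrite /A /B /C !mulr_sumr -!big_split /=; apply: eq_bigr => z _; rewrite /mus; ring.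
have C_le2 : C <= 2.
  have -> : 2 = \sum_z (mu' z + mu z) :> R by rewrite big_split /= hmu'.2 hmu.2.
  apply: ler_sum => z _; have := simplex_le1 z hmu; have := simplex_le1 z hmu'.
  by have := hmu.1 z; have := hmu'.1 z; nra.
have lin : \sum_z mu' z * u z - \sum_z mu z * u z = - (t * B).
  by rewrite -sumrB /B mulr_sumr -sumrN; apply: eq_bigr => z _; rewrite /u; ring.
have tsC : t / 2 * (s ^+ 2 * C) <= t * s ^+ 2.
  have : 0 <= t / 2 * s ^+ 2 by rewrite mulr_ge0 ?divr_ge0 ?sqr_ge0.
  nra.
rewrite -/A !mulrDr => near_min.
have tB : t / 2 * (2 * s * B) = s * (t * B) by field.
have key : s * (Rf mu - Rf mu' - t * B) < s * (t * s + delta / s).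
  have s_delta : s * (delta / s) = delta by rewrite mulrC divfK ?gt_eqF.
  rewrite [s * (_ + delta / s)]mulrDr s_delta; nra.
rewrite ltr_pM2l // in key; lra.
Qed.

End Proximal.

(* Proximal regularisation: an approximate minimiser [mu] of [Rf + t/2 |. - nu|^2] is
   close to [nu] for large [t], so lower semicontinuity gives [Rf mu >~ Rf nu], while
   [u = t (nu - mu)] is an approximate supporting slope of [Rf] at [mu]. *)
Lemma fenchel_moreau_approx (R : realType) (Z : finType) (Rf : (Z -> R) -> R) (m : R) :
  convex_on_simplex Rf -> lsc_on_simplex Rf -> (forall mu, simplex mu -> m <= Rf mu) ->
  forall nu, simplex nu -> forall eps : R, 0 < eps ->
  exists u : Z -> R, Rf nu - eps <= \sum_z nu z * u z - fconj Rf u.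
Proof.
move=> Rf_convex Rf_lsc Rf_ge nu hnu eps eps_gt0.
have [d d_gt0 lsc_nu] := Rf_lsc nu hnu (eps / 2) ltac:(lra).
pose K := Rf nu + 1 - m.
have K_gt0 : 0 < K by have := Rf_ge nu hnu; rewrite /K; lra.
have d2_gt0 : 0 < d ^+ 2 by rewrite exprn_gt0.
pose t := 4 * K / d ^+ 2.
have t_gt0 : 0 < t by rewrite divr_gt0 //; lra.
have t_d2 : t * d ^+ 2 = 4 * K by rewrite divfK ?gt_eqF.
pose s := eps / (4 * t + eps).
have s_gt0 : 0 < s by rewrite divr_gt0 //; lra.
have s_le1 : s <= 1 by rewrite ler_pdivrMr; lra.
have ts_le : t * s <= eps / 4.
  rewrite mulrA ler_pdivrMr; last lra.
  by have := mulr_ge0 (ltW eps_gt0) (ltW eps_gt0); lra.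
pose c := eps / (4 + 4 * eps).
have c_gt0 : 0 < c by rewrite divr_gt0 //; lra.
have c_le : c <= eps / 4 by rewrite ler_pdivrMr; nra.
have c_lt1 : c < 1 by rewrite ltr_pdivrMr; lra.
pose delta := s * c.
have delta_gt0 : 0 < delta by rewrite mulr_gt0.
have delta_lt1 : delta < 1 by rewrite /delta; nra.
have delta_s : delta / s = c by rewrite /delta mulrAC divff ?gt_eqF ?mul1r.
have [mu mu_min] := approx_argmin_exists Rf_ge hnu (ltW t_gt0) delta_gt0.
have hmu := mu_min.1.
have lsc_mu : Rf nu - eps / 2 < Rf mu.
  apply: lsc_nu => // z; have := approx_argmin_near z Rf_ge hnu t_gt0 mu_min.
  move=> near; have : t * (mu z - nu z) ^+ 2 < t * d ^+ 2 by move: K_gt0; rewrite t_d2 /K; lra.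
  by rewrite ltr_pM2l // ltr_norml => near_d; apply/andP; split; nra.
pose u z := t * (nu z - mu z).
have conj_mu : fconj Rf u <= \sum_z mu z * u z - Rf mu + eps / 2.
  apply: (fconj_le hmu) => mu' hmu'.
  have s_01 : 0 < s <= 1 by rewrite s_gt0 s_le1.
  have := approx_argmin_support Rf_convex (ltW t_gt0) s_01 mu_min hmu'.
  by rewrite delta_s; lra.
have slope_nu : \sum_z mu z * u z <= \sum_z nu z * u z.
  rewrite -subr_ge0 -sumrB; apply: sumr_ge0 => z _.
  by rewrite /u -mulrBl mulrCA -expr2 mulr_ge0 ?sqr_ge0 ?ltW.
exists u; lra.
Qed.

Section Game.
Variables (R : realType) (X Y Z : finType) (rho : X -> R) (E : Y -> Z).
Variables (pi0 : X -> Y -> R) (beta : R) (Rf : (Z -> R) -> R).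
Hypothesis rho_simplex : simplex rho.
Implicit Types (pi : X -> Y -> R) (q : X -> Z -> R).

Lemma sum_pushforward (p : Y -> R) (g : Z -> R) :
  \sum_y p y * g (E y) = \sum_z (\sum_(y | E y == z) p y) * g z.
Proof.
rewrite (partition_big E xpredT) //=; apply: eq_bigr => z _.
by rewrite mulr_suml; apply: eq_bigr => y /eqP ->.
Qed.

Lemma marginal_simplex pi x : is_policy pi -> simplex (marginal E pi x).
Proof.
move=> hpi; have [pi_ge0 pi_sum1] := hpi x; split=> [z|].
  by apply: sumr_ge0 => y _; exact: pi_ge0.
have := sum_pushforward (pi x) (fun=> 1); rewrite /marginal.
by under eq_bigr do rewrite mulr1; under [in RHS]eq_bigr do rewrite mulr1; move=> <-.
Qed.

Lemma cross_term_marginal pi x (g : Z -> R) :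
  - (beta * \sum_y pi x y * g (E y)) = \sum_z marginal E pi x z * - (beta * g z).
Proof.
rewrite sum_pushforward mulr_sumr -sumrN; apply: eq_bigr => z _; rewrite /marginal; ring.
Qed.

Lemma Ex_le (f g : X -> R) : (forall x, f x <= g x) -> Ex rho f <= Ex rho g.
Proof. by move=> le_fg; apply: ler_sum => x _; rewrite ler_wpM2l ?rho_simplex.1. Qed.

Lemma Gobj_le_Jobj (m : R) pi q : (forall mu, simplex mu -> m <= Rf mu) ->
  is_policy pi -> Gobj rho E pi0 beta Rf pi q <= Jobj rho E pi0 beta Rf pi.
Proof.
move=> Rf_ge hpi; apply: Ex_le => x.
have := fenchel_young Rf_ge (fun z => - (beta * ln (q x z))) (marginal_simplex x hpi).
rewrite -cross_term_marginal /Psi; lra.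
Qed.

Definition softmax (u : Z -> R) : Z -> R := fun z => expR (u z) / \sum_w expR (u w).

Lemma softmax_norm_gt0 (u : Z -> R) (z : Z) : 0 < \sum_w expR (u w).
Proof.
apply: lt_le_trans (expR_gt0 (u z)) _.
exact: (sum_ge_term (F := fun w => expR (u w)) z (fun w => ltW (expR_gt0 _))).
Qed.

Lemma softmax_int_simplex (u : Z -> R) (z0 : Z) : int_simplex (softmax u).
Proof.
split=> [z|]; first by rewrite divr_gt0 ?expR_gt0 // (softmax_norm_gt0 _ z).
by rewrite -mulr_suml mulfV // gt_eqF // (softmax_norm_gt0 _ z0).
Qed.

Lemma ln_softmax (u : Z -> R) z : ln (softmax u z) = u z - ln (\sum_w expR (u w)).
Proof. by rewrite ln_div ?expRK // posrE ?expR_gt0 // (softmax_norm_gt0 _ z). Qed.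

(* With [q = softmax (- u / beta)] the weight [- beta ln q] is [u] plus a constant,
   which [Psi] absorbs, so [G] recovers the biconjugate value [<nu, u> - Rf^* u]. *)
Lemma Jobj_le_Gobj_softmax (m eps : R) pi :
  0 < beta -> convex_on_simplex Rf -> lsc_on_simplex Rf ->
  (forall mu, simplex mu -> m <= Rf mu) -> is_policy pi -> 0 < eps ->
  exists2 q, is_target q & Jobj rho E pi0 beta Rf pi - eps <= Gobj rho E pi0 beta Rf pi q.
Proof.
move=> beta_gt0 Rf_convex Rf_lsc Rf_ge hpi eps_gt0.
have [u u_approx] := boolp.choice (fun x =>
  fenchel_moreau_approx Rf_convex Rf_lsc Rf_ge (marginal_simplex x hpi) eps_gt0).
pose q x := softmax (fun z => - u x z / beta).
exists q.
  by move=> x; have [z0 _] := simplex_pos (marginal_simplex x hpi); exact: softmax_int_simplex.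
pose c x := beta * ln (\sum_w expR (- u x w / beta)).
have weight x z : - (beta * ln (q x z)) = u x z + c x.
  by rewrite /q ln_softmax /c; field; lra.
have Psi_q x : Psi Rf beta (q x) = fconj Rf (u x) + c x.
  rewrite /Psi (boolp.funext (weight x)).
  exact (fconj_shift Rf_ge (u x) (c x) (marginal_simplex x hpi)).
have -> : Jobj rho E pi0 beta Rf pi - eps =
    Ex rho (fun x => Rf (marginal E pi x) + beta * KL (pi x) (pi0 x) - eps).
  by rewrite /Ex simplex_sumD.
apply: Ex_le => x; rewrite (cross_term_marginal pi x (fun z => ln (q x z))) Psi_q.
under eq_bigr do rewrite weight.
have := u_approx x; rewrite simplex_sumD; [lra | exact: marginal_simplex].
Qed.

Lemma Jobj_ereal_sup pi : 0 < beta -> convex_on_simplex Rf -> lsc_on_simplex Rf ->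
  is_policy pi ->
  ((Jobj rho E pi0 beta Rf pi)%:E =
   ereal_sup [set (Gobj rho E pi0 beta Rf pi q)%:E | q in [set q | is_target q]])%E.
Proof.
move=> beta_gt0 Rf_convex Rf_lsc hpi; have [m Rf_ge] := convex_bounded_below Rf_convex.
apply/eqP; rewrite eq_le; apply/andP; split.
  apply/lee_addgt0Pr => eps eps_gt0.
  have [q hq le_G] := Jobj_le_Gobj_softmax beta_gt0 Rf_convex Rf_lsc Rf_ge hpi eps_gt0.
  apply: (@le_trans _ _ ((Gobj rho E pi0 beta Rf pi q)%:E + eps%:E)%E).
    by rewrite -EFinD lee_fin; lra.
  by rewrite leeD2r //; apply: ereal_sup_ubound; exists q.
by apply: ge_ereal_sup => _ [q _ <-]; rewrite lee_fin (Gobj_le_Jobj q Rf_ge).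
Qed.

End Game.

Section Gibbs.
Variables (R : realType) (T : finType).
Implicit Types (p q : T -> R).

Lemma ln_lt_subr1 (x : R) : 0 < x -> x != 1 -> ln x < x - 1.
Proof.
move=> x_gt0 x_neq1; have ln_neq0 : ln x != 0.
  by apply: contra x_neq1 => /eqP ln0; rewrite -[x]lnK ?posrE // ln0 expR0.
by have := expR_gt1Dx ln_neq0; rewrite lnK ?posrE //; lra.
Qed.

Lemma ln_le_subr1 (x : R) : 0 < x -> ln x <= x - 1.
Proof.
move=> x_gt0; have [->|x_neq1] := eqVneq x 1; first by rewrite ln1 subrr.
exact/ltW/ln_lt_subr1.
Qed.

Definition kl_term (a b : R) := if a == 0 then 0 else a * ln (a / b).

Lemma KL_kl_term p q : KL p q = \sum_t kl_term (p t) (q t).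
Proof. by []. Qed.

(* [a ln (a / b) = - a ln (b / a) >= - a (b / a - 1)], strictly unless [a = b]. *)
Lemma kl_term_ge (a b : R) : 0 <= a -> 0 < b -> a - b <= kl_term a b.
Proof.
move=> a_ge0 b_gt0; rewrite /kl_term; have [->|a_neq0] := eqVneq a 0; first lra.
have a_gt0 : 0 < a by rewrite lt0r a_neq0.
rewrite -[a / b]invf_div lnV ?posrE ?divr_gt0 // mulrN.
have := ler_wpM2l (ltW a_gt0) (ln_le_subr1 (divr_gt0 b_gt0 a_gt0)).
by rewrite mulrBr mulrCA mulfV ?mulr1 //; lra.
Qed.

Lemma kl_term_eq (a b : R) : 0 <= a -> 0 < b -> kl_term a b = a - b -> a = b.
Proof.
move=> a_ge0 b_gt0; rewrite /kl_term; have [->|a_neq0] := eqVneq a 0; first lra.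
have a_gt0 : 0 < a by rewrite lt0r a_neq0.
have [ba1|ba_neq1] := eqVneq (b / a) 1.
  by move=> _; apply/esym/divr1_eq.
rewrite -[a / b]invf_div lnV ?posrE ?divr_gt0 // mulrN.
have := ln_lt_subr1 (divr_gt0 b_gt0 a_gt0) ba_neq1; rewrite -(ltr_pM2l a_gt0).
by rewrite mulrBr mulrCA mulfV ?mulr1 //; lra.
Qed.

Lemma KL_ge0 p q : simplex p -> int_simplex q -> 0 <= KL p q.
Proof.
move=> [p_ge0 p_sum1] [q_gt0 q_sum1]; rewrite KL_kl_term.
apply: le_trans (ler_sum _ (fun t _ => kl_term_ge (p_ge0 t) (q_gt0 t))).
by rewrite sumrB p_sum1 q_sum1 subrr.
Qed.

Lemma KL_eq0 p q : simplex p -> int_simplex q -> KL p q = 0 -> p = q.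
Proof.
move=> [p_ge0 p_sum1] [q_gt0 q_sum1]; rewrite KL_kl_term => KL0.
have gap_ge0 t (_ : true) : 0 <= kl_term (p t) (q t) - (p t - q t).
  by rewrite subr_ge0 kl_term_ge.
have gap0 : \sum_t (kl_term (p t) (q t) - (p t - q t)) = 0.
  by rewrite sumrB KL0 sumrB p_sum1 q_sum1 !subrr.
apply: boolp.funext => t; apply: kl_term_eq => //.
by have := psumr_eq0P gap_ge0 gap0 (i := t) isT; lra.
Qed.

Lemma KL_self p : (forall t, 0 < p t) -> KL p p = 0.
Proof.
move=> p_gt0; rewrite /KL big1 // => t _.
by rewrite gt_eqF // divff ?gt_eqF // ln1 mulr0.
Qed.

End Gibbs.

Section BestResponse.
Variables (R : realType) (X Y Z : finType) (rho : X -> R) (E : Y -> Z).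
Variables (pi0 : X -> Y -> R) (beta : R) (Rf : (Z -> R) -> R) (q : X -> Z -> R).
Hypotheses (rho_simplex : simplex rho) (pi0_policy : is_policy pi0).
Hypotheses (pi0_gt0 : forall x y, 0 < pi0 x y) (beta_gt0 : 0 < beta) (q_target : is_target q).
Implicit Types (pi : X -> Y -> R).

Let q_gt0 x z : 0 < q x z := (q_target x).1 z.

Lemma Cnorm_gt0 x : 0 < Cnorm E pi0 q x.
Proof.
have [y _] := simplex_pos (pi0_policy x).
apply: lt_le_trans (mulr_gt0 (pi0_gt0 x y) (q_gt0 x (E y))) _.
exact: (sum_ge_term (F := fun y => pi0 x y * q x (E y)) y (fun y => ltW (mulr_gt0 _ _))).
Qed.

Lemma qtilde_int_simplex x : int_simplex (qtilde E pi0 q x).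
Proof.
split=> [y|]; first by rewrite divr_gt0 ?mulr_gt0 ?Cnorm_gt0.
by rewrite -mulr_suml mulfV // gt_eqF // Cnorm_gt0.
Qed.

Lemma qtilde_policy : is_policy (qtilde E pi0 q).
Proof. by move=> x; have [qt_gt0 qt_sum1] := qtilde_int_simplex x; split=> // y; exact: ltW. Qed.

Lemma KL_qtilde pi x : is_policy pi ->
  KL (pi x) (qtilde E pi0 q x) =
  KL (pi x) (pi0 x) - \sum_y pi x y * ln (q x (E y)) + ln (Cnorm E pi0 q x).
Proof.
move=> hpi; have [pi_ge0 pi_sum1] := hpi x.
rewrite -[ln (Cnorm _ _ _ _)]mul1r -pi_sum1 mulr_suml /KL -sumrB -big_split.
apply: eq_bigr => y _ /=; have [->|pi_neq0] := eqVneq (pi x y) 0.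
  by rewrite !mul0r subr0 addr0.
have pi_gt0 : 0 < pi x y by rewrite lt0r pi_neq0 pi_ge0.
have C_gt0 := Cnorm_gt0 x; have pi0_pos := pi0_gt0 x y; have q_pos := q_gt0 x (E y).
have -> : pi x y / qtilde E pi0 q x y = pi x y / pi0 x y * Cnorm E pi0 q x / q x (E y).
  by rewrite /qtilde; field; rewrite !gt_eqF.
by rewrite ln_div ?lnM ?posrE ?mulr_gt0 ?divr_gt0 ?invr_gt0 //; ring.
Qed.

Definition game_offset : R :=
  Ex rho (fun x => - (beta * ln (Cnorm E pi0 q x)) - Psi Rf beta (q x)).

Lemma Gobj_decomp pi : is_policy pi ->
  Gobj rho E pi0 beta Rf pi q =
  beta * Ex rho (fun x => KL (pi x) (qtilde E pi0 q x)) + game_offset.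
Proof.
move=> hpi; rewrite /Gobj /Ex mulr_sumr -big_split; apply: eq_bigr => x _ /=.
by rewrite KL_qtilde //; ring.
Qed.

Lemma Gobj_qtilde : Gobj rho E pi0 beta Rf (qtilde E pi0 q) q = game_offset.
Proof.
rewrite Gobj_decomp; last exact: qtilde_policy.
rewrite /Ex big1 ?mulr0 ?add0r // => x _.
by rewrite KL_self ?mulr0 //; exact: (qtilde_int_simplex x).1.
Qed.

Lemma Ex_KL_qtilde_ge0 pi : is_policy pi ->
  0 <= Ex rho (fun x => KL (pi x) (qtilde E pi0 q x)).
Proof.
move=> hpi; apply: sumr_ge0 => x _.
by rewrite mulr_ge0 ?rho_simplex.1 ?(KL_ge0 (hpi x) (qtilde_int_simplex x)).
Qed.

Lemma Gobj_qtilde_le pi : is_policy pi ->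
  Gobj rho E pi0 beta Rf (qtilde E pi0 q) q <= Gobj rho E pi0 beta Rf pi q.
Proof.
move=> hpi; rewrite Gobj_qtilde Gobj_decomp // lerDr.
by rewrite mulr_ge0 ?Ex_KL_qtilde_ge0 ?ltW.
Qed.

Lemma Gobj_eq_qtilde pi : is_policy pi ->
  Gobj rho E pi0 beta Rf pi q = Gobj rho E pi0 beta Rf (qtilde E pi0 q) q ->
  forall x, 0 < rho x -> pi x = qtilde E pi0 q x.
Proof.
move=> hpi; rewrite Gobj_qtilde Gobj_decomp // -[X in _ = X]add0r => /addIr/eqP.
rewrite mulf_eq0 gt_eqF //= => /eqP Ex_KL0 x rho_x.
have term_ge0 x' (_ : true) : 0 <= rho x' * KL (pi x') (qtilde E pi0 q x').
  by rewrite mulr_ge0 ?rho_simplex.1 ?(KL_ge0 (hpi x') (qtilde_int_simplex x')).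
have /eqP := psumr_eq0P term_ge0 Ex_KL0 (i := x) isT.
by rewrite mulf_eq0 (gt_eqF rho_x) /= => /eqP; exact: KL_eq0 (hpi x) (qtilde_int_simplex x).
Qed.

End BestResponse.

Theorem theorem1 (R : realType) (X Y Z : finType) (rho : X -> R) (E : Y -> Z)
  (pi0 : X -> Y -> R) (beta : R) (Rf : (Z -> R) -> R) :
  simplex rho ->
  is_policy pi0 -> (forall x y, 0 < pi0 x y) ->
  0 < beta ->
  convex_on_simplex Rf -> lsc_on_simplex Rf ->
  ((forall pi : X -> Y -> R, is_policy pi ->
      ((Jobj rho E pi0 beta Rf pi)%:E =
       ereal_sup [set (Gobj rho E pi0 beta Rf pi q)%:E | q in [set q : X -> Z -> R | is_target q]])%E)
   /\
   (forall Pi : set (X -> Y -> R), Pi !=set0 -> Pi `<=` [set p : X -> Y -> R | is_policy p] ->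
      (ereal_inf [set (Jobj rho E pi0 beta Rf pi)%:E | pi in Pi] =
       ereal_inf [set ereal_sup [set (Gobj rho E pi0 beta Rf pi q)%:E
                                  | q in [set q : X -> Z -> R | is_target q]] | pi in Pi])%E))
  /\
  (forall q : X -> Z -> R, is_target q ->
     (exists kappa : R, forall pi : X -> Y -> R, is_policy pi ->
        Gobj rho E pi0 beta Rf pi q =
        beta * Ex rho (fun x => KL (pi x) (qtilde E pi0 q x)) + kappa)
     /\
     let pistar := qtilde E pi0 q in
     is_policy pistar /\
     (forall pi : X -> Y -> R, is_policy pi ->
        Gobj rho E pi0 beta Rf pistar q <= Gobj rho E pi0 beta Rf pi q) /\
     (forall pi : X -> Y -> R, is_policy pi ->
        Gobj rho E pi0 beta Rf pi q = Gobj rho E pi0 beta Rf pistar q ->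
        forall x, 0 < rho x -> pi x = pistar x)).
Proof.
move=> rho_simplex pi0_policy pi0_gt0 beta_gt0 Rf_convex Rf_lsc.
have variational pi : is_policy pi -> _ :=
  Jobj_ereal_sup E pi0 rho_simplex (pi := pi) beta_gt0 Rf_convex Rf_lsc.
split.
  split=> // Pi _ Pi_policies; congr ereal_inf; apply/seteqP.
  by split=> _ [pi Pi_pi <-]; exists pi => //; rewrite variational //; exact: Pi_policies.
move=> q q_target; split; first by exists (game_offset rho E pi0 beta Rf q) => pi; exact: Gobj_decomp.
split; first exact: qtilde_policy.
by split=> pi; [exact: Gobj_qtilde_le | exact: Gobj_eq_qtilde].
Qed.
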